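(* Let $R$ be a commutative coherent ring and $0\to A\to B\to C\to 0$ an exact sequence of $R$-modules with $A$ absolutely $w$-pure. Then $B$ is absolutely $w$-pure if and only if $C$ is absolutely $w$-pure.
   Context: A ring is coherent if every finitely generated ideal is finitely presented. A $GV$-ideal of $R$ is a finitely generated ideal $J$ such that the natural map $R\to\mathrm{Hom}_R(J,R)$ is an isomorphism; $GV(R)$ is the set of $GV$-ideals. An $R$-module $X$ is $GV$-torsion if every $x\in X$ satisfies $Jx=0$ for some $J\in GV(R)$. An $R$-module $A$ is absolutely $w$-pure if $\mathrm{Ext}^1_R(N,A)$ is $GV$-torsion for every finitely presented $R$-module $N$. *)

From HB Require Import structures.
From mathcomp Require Import all_boot all_order all_algebra.
Set Implicit Arguments. Unset Strict Implicit. Unset Printing Implicit Defensive.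
Import GRing.Theory.
Local Open Scope ring_scope.

Definition in_ideal_gen (R : comNzRingType) (m : nat) (a : 'I_m -> R) (j : R) : Prop :=
  exists x : 'I_m -> R, j = \sum_(i < m) x i * a i.

Definition syzygy (R : comNzRingType) (m : nat) (a : 'I_m -> R) (x : 'I_m -> R) : Prop :=
  \sum_(i < m) x i * a i = 0.

(* A finitely generated ideal I (given by generators a) is finitely presented:
   there is a finite generating family a' of the same ideal such that the kernel of
   R^m' -> I is finitely generated, i.e. there is an exact sequence R^k -> R^m' -> I -> 0. *)
Definition fp_ideal (R : comNzRingType) (m : nat) (a : 'I_m -> R) : Prop :=
  exists (m' : nat) (a' : 'I_m' -> R),
    (forall j, in_ideal_gen a j <-> in_ideal_gen a' j) /\
    exists (k : nat) (s : 'I_k -> ('I_m' -> R)),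
      forall x : 'I_m' -> R,
        syzygy a' x <-> exists y : 'I_k -> R, forall i, x i = \sum_(l < k) y l * s l i.

Definition coherent (R : comNzRingType) : Prop :=
  forall (m : nat) (a : 'I_m -> R), fp_ideal a.

(* GV-ideals: J finitely generated (by a) such that the natural map
   R -> Hom_R(J, R), r |-> (j |-> r j), is an isomorphism.
   Elements of Hom_R(J,R) are represented by functions R -> R that are R-linear on J
   (only their values on J matter). *)
Definition linear_on_ideal (R : comNzRingType) (m : nat) (a : 'I_m -> R) (phi : R -> R) : Prop :=
  forall (c j1 j2 : R), in_ideal_gen a j1 -> in_ideal_gen a j2 ->
    phi (c * j1 + j2) = c * phi j1 + phi j2.

Definition GV_ideal (R : comNzRingType) (m : nat) (a : 'I_m -> R) : Prop :=
  (forall r : R, (forall j, in_ideal_gen a j -> r * j = 0) -> r = 0) /\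
  (forall phi : R -> R, linear_on_ideal a phi ->
     exists r : R, forall j, in_ideal_gen a j -> phi j = r * j).

(* A finitely presented module is N = R^n / K with K the (finitely generated)
   submodule of R^n = 'rV_n spanned by the rows of M : 'M_(m, n). *)
Definition in_rowspan (R : comNzRingType) (m n : nat) (M : 'M[R]_(m, n)) (u : 'rV[R]_n) : Prop :=
  exists x : 'rV[R]_m, u = x *m M.

(* R-linear maps K -> A, represented as functions on R^n that are linear on K. *)
Definition linear_on_sub (R : comNzRingType) (A : lmodType R) (m n : nat)
    (M : 'M[R]_(m, n)) (f : 'rV[R]_n -> A) : Prop :=
  forall (c : R) (u v : 'rV[R]_n), in_rowspan M u -> in_rowspan M v ->
    f (c *: u + v) = c *: f u + f v.

(* From 0 -> K -> R^n -> N -> 0 with R^n free, Ext^1_R(N, A) = Hom_R(K, A) / Im Hom_R(R^n, A),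
   the class [f] of f : K -> A being 0 iff f extends to R^n; the R-action is r[f] = [r f].
   Ext^1_R(N, A) is GV-torsion iff for every f : K -> A there is a GV-ideal J with
   J [f] = 0, i.e. for every r in J, r f extends to an R-linear map R^n -> A. *)
Definition Ext1_fp_GV_torsion (R : comNzRingType) (A : lmodType R) (m n : nat)
    (M : 'M[R]_(m, n)) : Prop :=
  forall f : 'rV[R]_n -> A, linear_on_sub M f ->
    exists (k : nat) (a : 'I_k -> R), GV_ideal a /\
      forall r : R, in_ideal_gen a r ->
        exists g : {linear 'rV[R]_n -> A},
          forall u, in_rowspan M u -> g u = r *: f u.

Definition absolutely_w_pure (R : comNzRingType) (A : lmodType R) : Prop :=
  forall (m n : nat) (M : 'M[R]_(m, n)), Ext1_fp_GV_torsion A M.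

Definition short_exact (R : comNzRingType) (A B C : lmodType R)
    (i : {linear A -> B}) (p : {linear B -> C}) : Prop :=
  injective i /\ (forall c : C, exists b : B, p b = c) /\
  (forall b : B, p b = 0 <-> exists x : A, b = i x).

(* A class in Ext^1(R^n/K, X) is represented by an R-linear f : K -> X, and r kills it
   exactly when r f extends to R^n; these r form an ideal, and X is absolutely w-pure when
   every such ideal contains a GV-ideal.  Since products of GV-ideals are GV-ideals, this
   property passes to extensions: if (a_1, ..., a_k) is GV and each a_j J_j kills [f] for
   some GV-ideal J_j, then (a) J_1 ... J_k is a GV-ideal killing [f].

   If A and C are absolutely w-pure and f : K -> B, a GV-ideal (a) kills [p f]; lifting the
   extension of a_j p f to H : R^n -> B, the map a_j f - H lands in A, where a GV-ideal
   kills it.  If A and B are absolutely w-pure and f : K -> C, coherence presents K as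
   R^m / L with L finitely generated; lifting x |-> f (x M) to H : R^m -> B, H maps L into
   A, so a_j H - i g vanishes on L for a GV-ideal (a) and suitable g, hence induces
   psi : K -> B with p psi = a_j f, and B's w-purity applied to psi finishes. *)

From HB Require Import structures.
From mathcomp Require Import all_boot all_order all_algebra.
From Stdlib Require Import ClassicalEpsilon.
Set Implicit Arguments. Unset Strict Implicit. Unset Printing Implicit Defensive.
Import GRing.Theory.
Local Open Scope ring_scope.

Lemma choice_on (X Y : Type) (y0 : Y) (P : X -> Prop) (Q : X -> Y -> Prop) :
  (forall x, P x -> exists y, Q x y) -> exists f : X -> Y, forall x, P x -> Q x (f x).
Proof.
move=> hPQ; apply: (choice (fun x y => P x -> Q x y)) => x.
have [/hPQ [y Qxy] | nPx] := classic (P x); first by exists y.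
by exists y0.
Qed.

Section Ideals.

Variable R : comNzRingType.

Definition ideal_closed (P : R -> Prop) : Prop :=
  P 0 /\ forall c x y, P x -> P y -> P (c * x + y).

Lemma ideal_closedM (P : R -> Prop) c x : ideal_closed P -> P x -> P (c * x).
Proof. by move=> [P0 PD] Px; rewrite -[c * x]addr0; apply: PD. Qed.

Variables (m : nat) (a : 'I_m -> R).

Lemma in_ideal_gen_closed : ideal_closed (in_ideal_gen a).
Proof.
split; first by exists (fun _ => 0); rewrite big1 // => i _; rewrite mul0r.
move=> c _ _ [u ->] [v ->]; exists (fun i => c * u i + v i).
rewrite mulr_sumr -big_split; apply: eq_bigr => i _.
by rewrite mulrDl mulrA.
Qed.

Lemma generator_in_ideal_gen i : in_ideal_gen a (a i).
Proof.
exists (fun j => (j == i)%:R).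
by rewrite (bigD1 i) //= eqxx mul1r big1 ?addr0 // => j /negbTE ->; rewrite mul0r.
Qed.

Lemma in_ideal_gen_min (P : R -> Prop) :
  ideal_closed P -> (forall i, P (a i)) -> forall j, in_ideal_gen a j -> P j.
Proof.
move=> [P0 PD] Pa _ [x ->]; apply: (big_ind P) => //.
  by move=> u v Pu Pv; rewrite -[u]mul1r; apply: PD.
by move=> i _; apply: ideal_closedM.
Qed.

Lemma linear_on_ideal0 (phi : R -> R) : linear_on_ideal a phi -> phi 0 = 0.
Proof.
have [I0 _] := in_ideal_gen_closed.
move=> /(_ 1 0 0 I0 I0); rewrite !mul1r addr0 => e.
by apply: (@addrI _ (phi 0)); rewrite addr0 -e.
Qed.

Lemma linear_on_ideal_eq (phi : R -> R) r :
  linear_on_ideal a phi -> (forall i, phi (a i) = r * a i) ->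
  forall j, in_ideal_gen a j -> phi j = r * j.
Proof.
move=> hphi ha.
pose agree j := in_ideal_gen a j /\ phi j = r * j.
suff agreeP j : in_ideal_gen a j -> agree j by move=> j /agreeP [].
have [I0 ID] := in_ideal_gen_closed.
apply: in_ideal_gen_min => [|i]; last by split; [apply: generator_in_ideal_gen | apply: ha].
split; first by rewrite /agree linear_on_ideal0 // mulr0.
move=> c x y [Ix ex] [Iy ey]; split; first exact: ID.
by rewrite hphi // ex ey mulrDr mulrCA.
Qed.

End Ideals.

Section IdealProduct.

Variables (R : comNzRingType) (k1 k2 : nat) (a : 'I_k1 -> R) (b : 'I_k2 -> R).

Definition prod_gens (t : 'I_#|{: 'I_k1 * 'I_k2}|) : R :=
  a (enum_val t).1 * b (enum_val t).2.

Lemma prod_gens_generator i l : in_ideal_gen prod_gens (a i * b l).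
Proof.
by have := generator_in_ideal_gen prod_gens (enum_rank (i, l)); rewrite /prod_gens enum_rankK.
Qed.

Lemma in_prod_gens_mul x y :
  in_ideal_gen a x -> in_ideal_gen b y -> in_ideal_gen prod_gens (x * y).
Proof.
have [I0 ID] := in_ideal_gen_closed prod_gens.
have mulr_closed z : ideal_closed (fun x => in_ideal_gen prod_gens (x * z)).
  by split=> [|c u v hu hv]; rewrite ?mul0r // mulrDl -mulrA; apply: ID.
move=> hx hy; rewrite mulrC; move: y hy.
apply: (in_ideal_gen_min (P := fun y => in_ideal_gen prod_gens (y * x))) => // l.
rewrite mulrC; move: x hx.
apply: (in_ideal_gen_min (P := fun x => in_ideal_gen prod_gens (x * b l))) => // i.
exact: prod_gens_generator.
Qed.

Lemma in_prod_gensl j : in_ideal_gen prod_gens j -> in_ideal_gen a j.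
Proof.
apply: in_ideal_gen_min; first exact: in_ideal_gen_closed.
move=> t; rewrite /prod_gens mulrC.
by apply: ideal_closedM; [apply: in_ideal_gen_closed | apply: generator_in_ideal_gen].
Qed.

Lemma in_prod_gensr j : in_ideal_gen prod_gens j -> in_ideal_gen b j.
Proof.
apply: in_ideal_gen_min; first exact: in_ideal_gen_closed.
move=> t; rewrite /prod_gens.
by apply: ideal_closedM; [apply: in_ideal_gen_closed | apply: generator_in_ideal_gen].
Qed.

End IdealProduct.

Section GVIdeals.

Variable R : comNzRingType.

Lemma GV_ideal1 : GV_ideal (fun _ : 'I_1 => 1 : R).
Proof.
have I1 j : in_ideal_gen (fun _ : 'I_1 => 1 : R) j.
  by exists (fun _ => j); rewrite big_ord1 mulr1.
split=> [r /(_ 1 (I1 1)) | phi hphi]; first by rewrite mulr1.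
exists (phi 1) => j _; have := hphi j 1 0 (I1 _) (I1 _).
by rewrite mulr1 (linear_on_ideal0 hphi) !addr0 mulrC.
Qed.

(* For y in (b), x |-> phi (x y) is linear on (a), hence multiplication by some rho y;
   rho is linear on (b), hence multiplication by some r. *)
Lemma GV_ideal_prod k1 k2 (a : 'I_k1 -> R) (b : 'I_k2 -> R) :
  GV_ideal a -> GV_ideal b -> GV_ideal (prod_gens a b).
Proof.
move=> [inja sura] [injb surb]; split.
  move=> r hr; apply: injb => y hy; apply: inja => x hx.
  by rewrite -mulrA [y * x]mulrC; apply: hr; apply: in_prod_gens_mul.
move=> phi hphi.
have rho_ex y : in_ideal_gen b y ->
    exists r, forall x, in_ideal_gen a x -> phi (x * y) = r * x.
  move=> hy; apply: sura => c x1 x2 h1 h2.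
  by rewrite mulrDl -mulrA hphi //; apply: in_prod_gens_mul.
have [rho rhoP] := choice_on 0 rho_ex.
have [_ IbD] := in_ideal_gen_closed b.
have [r hr] : exists r, forall y, in_ideal_gen b y -> rho y = r * y.
  apply: surb => c y1 y2 h1 h2; apply/eqP; rewrite -subr_eq0; apply/eqP.
  apply: inja => x hx; rewrite mulrBl -rhoP //; last exact: IbD.
  rewrite mulrDl -mulrA -!rhoP // mulrDr mulrCA hphi ?subrr //;
    exact: in_prod_gens_mul.
exists r; apply: linear_on_ideal_eq => // t.
rewrite /prod_gens rhoP ?hr; try exact: generator_in_ideal_gen.
by rewrite mulrAC -mulrA.
Qed.

Definition contains_GV_ideal (P : R -> Prop) : Prop :=
  exists k (a : 'I_k -> R), GV_ideal a /\ forall r, in_ideal_gen a r -> P r.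

Lemma contains_GV_ideal_all k (Q : 'I_k -> R -> Prop) :
  (forall j, contains_GV_ideal (Q j)) -> contains_GV_ideal (fun r => forall j, Q j r).
Proof.
elim: k Q => [|k IHk] Q hQ.
  by exists 1, (fun _ => 1); split=> [|r _ []//]; apply: GV_ideal1.
have [k' [a [GVa ha]]] := IHk (fun j => Q (widen_ord (leqnSn k) j)) (fun j => hQ _).
have [k2 [b [GVb hb]]] := hQ ord_max.
exists _, (prod_gens a b); split=> [|r hr j]; first exact: GV_ideal_prod.
have [j' ->|->] := unliftP ord_max j; last exact/hb/(in_prod_gensr hr).
have -> : lift ord_max j' = widen_ord (leqnSn k) j'.
  by apply: val_inj; rewrite /= /bump leqNgt ltn_ord.
exact/ha/(in_prod_gensl hr).
Qed.

Lemma contains_GV_ideal_ext (P : R -> Prop) k (a : 'I_k -> R) :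
  ideal_closed P -> GV_ideal a -> (forall j, contains_GV_ideal (fun s => P (a j * s))) ->
  contains_GV_ideal P.
Proof.
move=> Pideal GVa /contains_GV_ideal_all [k' [b [GVb hb]]].
exists _, (prod_gens a b); split; first exact: GV_ideal_prod.
by apply: in_ideal_gen_min => // t; apply/hb/generator_in_ideal_gen.
Qed.

End GVIdeals.

Section FreeRowModule.

Variables (R : comNzRingType) (n : nat).

Definition rV_lin (B : lmodType R) (v : 'I_n -> B) (u : 'rV[R]_n) : B := \sum_j u 0 j *: v j.

Lemma rV_lin_is_linear (B : lmodType R) (v : 'I_n -> B) : linear (rV_lin v).
Proof.
move=> c u w; rewrite /rV_lin scaler_sumr -big_split; apply: eq_bigr => j _.
by rewrite !mxE scalerDl scalerA.
Qed.

HB.instance Definition _ (B : lmodType R) (v : 'I_n -> B) :=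
  GRing.isLinear.Build R 'rV[R]_n B _ (rV_lin v) (rV_lin_is_linear v).

Lemma linear_rV_expand (B : lmodType R) (g : {linear 'rV[R]_n -> B}) u :
  g u = rV_lin (fun j => g (delta_mx 0 j)) u.
Proof. by rewrite {1}(row_sum_delta u) linear_sum; apply: eq_bigr => j _; rewrite linearZ. Qed.

Lemma lift_linear_rV (B C : lmodType R) (p : {linear B -> C}) :
  (forall c, exists b, p b = c) ->
  forall g : {linear 'rV[R]_n -> C}, exists h : {linear 'rV[R]_n -> B}, forall u, p (h u) = g u.
Proof.
move=> surj_p g; have [v pv] := choice (fun j b => p b = g (delta_mx 0 j)) (fun j => surj_p _).
exists (rV_lin v : {linear _ -> _}) => u.
rewrite (linear_rV_expand g) /rV_lin linear_sum.
by apply: eq_bigr => j _; rewrite linearZ pv.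
Qed.

End FreeRowModule.

Section Submodules.

Variables (R : comNzRingType) (B : lmodType R) (m n : nat) (M : 'M[R]_(m, n)).

Lemma in_rowspan0 : in_rowspan M 0.
Proof. by exists 0; rewrite mul0mx. Qed.

Lemma in_rowspan_closed c u v :
  in_rowspan M u -> in_rowspan M v -> in_rowspan M (c *: u + v).
Proof. by move=> [x ->] [y ->]; exists (c *: x + y); rewrite mulmxDl scalemxAl. Qed.

Lemma linear_on_sub0 (f : 'rV[R]_n -> B) : linear_on_sub M f -> f 0 = 0.
Proof.
move=> /(_ 1 0 0 in_rowspan0 in_rowspan0); rewrite !scale1r addr0 => e.
by apply: (@addrI _ (f 0)); rewrite addr0 -e.
Qed.

(* [Ext1_fp_GV_torsion X M] unfolds to
   [forall f, linear_on_sub M f -> contains_GV_ideal (extends_scaled M f)]. *)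
Definition extends_scaled (f : 'rV[R]_n -> B) (r : R) : Prop :=
  exists g : {linear 'rV[R]_n -> B}, forall u, in_rowspan M u -> g u = r *: f u.

Lemma extends_scaled_closed f : ideal_closed (extends_scaled f).
Proof.
split; first by exists (\0 : {linear _ -> _}) => u _; rewrite scale0r.
move=> c r1 r2 [g1 hg1] [g2 hg2]; exists (c \*: g1 \+ g2 : {linear _ -> _}) => u hu.
by rewrite /= hg1 // hg2 // scalerA scalerDl.
Qed.

Lemma linear_on_sub_mulmx (f : 'rV[R]_n -> B) :
  linear_on_sub M f -> exists G : {linear 'rV[R]_m -> B}, forall x, G x = f (x *m M).
Proof.
move=> hf; have lin : linear (fun x => f (x *m M)).
  by move=> c x y; rewrite mulmxDl -scalemxAl hf //; [exists x | exists y].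
by exists (HB.pack_for {linear 'rV[R]_m -> B} (fun x => f (x *m M))
  (GRing.isLinear.Build _ _ _ _ _ lin)).
Qed.

Lemma factor_through_injective (A : lmodType R) (i : {linear A -> B}) (h : 'rV[R]_n -> B) :
  injective i -> linear_on_sub M h -> (forall u, in_rowspan M u -> exists a, h u = i a) ->
  exists phi, linear_on_sub M phi /\ forall u, in_rowspan M u -> h u = i (phi u).
Proof.
move=> inj_i hh /(choice_on 0) [phi iphi]; exists phi; split=> // c u v hu hv.
by apply: inj_i; rewrite linearP -!iphi ?hh //; apply: in_rowspan_closed.
Qed.

Lemma factor_through_mulmx (H : {linear 'rV[R]_m -> B}) :
  (forall x, x *m M = 0 -> H x = 0) ->
  exists psi, linear_on_sub M psi /\ forall x, psi (x *m M) = H x.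
Proof.
move=> Hker.
have [pre preP] := choice_on 0 (P := in_rowspan M) (Q := fun u x => u = x *m M) (fun u hu => hu).
have Hpre x : H (pre (x *m M)) = H x.
  apply/eqP; rewrite -subr_eq0 -linearB Hker // mulmxBl -preP ?subrr //; by exists x.
exists (fun u => H (pre u)); split=> // c _ _ [x ->] [y ->].
by rewrite scalemxAl -mulmxDl !Hpre linearP.
Qed.

End Submodules.

Section RowKernels.

Variable R : comNzRingType.

Definition row_kernel_spanned (p m k : nat) (M : 'M[R]_(m, p)) (S : 'M[R]_(k, m)) : Prop :=
  forall x : 'rV[R]_m, x *m M = 0 <-> in_rowspan S x.

Lemma syzygy_row_kernel m (a : 'I_m -> R) k (s : 'I_k -> 'I_m -> R) :
  (forall x, syzygy a x <-> exists y : 'I_k -> R, forall i, x i = \sum_l y l * s l i) ->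
  row_kernel_spanned (\col_i a i) (\matrix_(l, i) s l i).
Proof.
move=> hs x; have syzE : x *m \col_i a i = 0 <-> syzygy a (x 0).
  have xaE : (x *m \col_i a i) 0 0 = \sum_i x 0 i * a i.
    by rewrite mxE; apply: eq_bigr => i _; rewrite mxE.
  split=> [xa0 | e]; first by rewrite /syzygy -xaE xa0 mxE.
  by apply/rowP => z; rewrite ord1 xaE e mxE.
rewrite syzE hs; split=> [[y hy] | [z ->]].
  exists (\row_l y l); apply/rowP => i; rewrite hy !mxE.
  by apply: eq_bigr => l _; rewrite !mxE.
by exists (z 0) => i; rewrite !mxE; apply: eq_bigr => l _; rewrite mxE.
Qed.

Lemma row_kernel_spanned_change_gens p m m' k (c : 'M[R]_(m, p)) (c' : 'M[R]_(m', p))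
    (C : 'M[R]_(m, m')) (D : 'M[R]_(m', m)) (S' : 'M[R]_(k, m')) :
  c = C *m c' -> c' = D *m c -> row_kernel_spanned c' S' ->
  row_kernel_spanned c (col_mx (1%:M - C *m D) (S' *m D)).
Proof.
move=> eC eD hS' x; split=> [xc0 | [w ->]].
  have [z xCz] : in_rowspan S' (x *m C) by apply/hS'; rewrite -mulmxA -eC.
  exists (row_mx x z); rewrite mul_row_col mulmxBr mulmx1 mulmxA -xCz mulmxA.
  by rewrite subrK.
rewrite -[w]hsubmxK mul_row_col mulmxDl -!mulmxA mulmxBl mul1mx -mulmxA -eD -eC.
by rewrite subrr mulmx0 add0r mulmxA; apply/hS'; exists (rsubmx w).
Qed.

Lemma row_kernel_spanned_row_mx p1 p2 m k1 k2 (c : 'M[R]_(m, p1)) (M2 : 'M[R]_(m, p2))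
    (T : 'M[R]_(k1, m)) (S2 : 'M[R]_(k2, k1)) :
  row_kernel_spanned c T -> row_kernel_spanned (T *m M2) S2 ->
  row_kernel_spanned (row_mx c M2) (S2 *m T).
Proof.
move=> hT hS2 x; rewrite mul_mx_row; split=> [/eqP | [z ->]].
  rewrite row_mx_eq0 => /andP[/eqP/hT [y ->] /eqP yTM2].
  have [z ->] : in_rowspan S2 y by apply/hS2; rewrite mulmxA.
  by exists z; rewrite mulmxA.
have zS2Tc : z *m S2 *m T *m c = 0 by apply/hT; exists (z *m S2).
have zS2TM2 : z *m S2 *m T *m M2 = 0 by rewrite -mulmxA; apply/hS2; exists z.
by rewrite !mulmxA zS2Tc zS2TM2 row_mx0.
Qed.

Hypothesis coh : coherent R.

Lemma coherent_col_kernel m (c : 'cV[R]_m) : exists k (S : 'M[R]_(k, m)), row_kernel_spanned c S.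
Proof.
have [m' [a' [same [k [s hs]]]]] := coh (fun i => c i 0).
have [C hC] := choice (fun i w => c i 0 = \sum_j w j * a' j)
  (fun i => (same _).1 (generator_in_ideal_gen _ i)).
have [D hD] := choice (fun j w => a' j = \sum_l w l * c l 0)
  (fun j => (same _).2 (generator_in_ideal_gen a' j)).
eexists; eexists; apply: (row_kernel_spanned_change_gens (c' := \col_j a' j)
  (C := \matrix_(i, j) C i j) (D := \matrix_(j, l) D j l) (S' := \matrix_(l, j) s l j)).
- by apply/matrixP => i z; rewrite ord1 !mxE hC; apply: eq_bigr => j _; rewrite !mxE.
- by apply/matrixP => j z; rewrite ord1 !mxE hD; apply: eq_bigr => l _; rewrite !mxE.
- exact: syzygy_row_kernel.
Qed.

Lemma coherent_row_kernel n m (M : 'M[R]_(m, n)) :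
  exists k (S : 'M[R]_(k, m)), row_kernel_spanned M S.
Proof.
elim: n m M => [|n IHn] m M.
  by exists m, 1%:M => x; rewrite thinmx0; split=> _ //; exists x; rewrite mulmx1.
pose M' : 'M[R]_(m, 1 + n) := M.
have [k1 [T hT]] := coherent_col_kernel (lsubmx M').
have [k2 [S2 hS2]] := IHn _ (T *m rsubmx M').
exists k2, (S2 *m T).
by have := row_kernel_spanned_row_mx hT hS2; rewrite hsubmxK.
Qed.

End RowKernels.

Section ShortExactSequences.

Variables (R : comNzRingType) (A B C : lmodType R).
Variables (i : {linear A -> B}) (p : {linear B -> C}).

Lemma absolutely_w_pure_ext :
  short_exact i p -> absolutely_w_pure A -> absolutely_w_pure C -> absolutely_w_pure B.
Proof.
move=> [inj_i [surj_p exact_ip]] wA wC m n M f hf.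
have hpf : linear_on_sub M (p \o f) by move=> c u v hu hv; rewrite /= hf // linearP.
have [k [a [GVa ha]]] := wC m n M _ hpf.
apply: (contains_GV_ideal_ext (extends_scaled_closed M f) GVa) => j.
have [g hg] := ha _ (generator_in_ideal_gen a j).
have [H pH] := lift_linear_rV surj_p g.
have hdefect : linear_on_sub M (a j \*: f \- H).
  move=> c u v hu hv; rewrite /= hf // (linearP H) scalerDr scalerBr scalerA.
  by rewrite [a j * c]mulrC -scalerA opprD addrACA.
have defect_in_A u : in_rowspan M u -> exists x, (a j \*: f \- H) u = i x.
  by move=> hu; apply/exact_ip; rewrite /= linearB linearZ pH hg // subrr.
have [phi [hphi iphi]] := factor_through_injective inj_i hdefect defect_in_A.
have [k2 [b [GVb hb]]] := wA m n M phi hphi.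
exists k2, b; split=> // s hs.
have [g2 hg2] := hb s hs.
exists (s \*: H \+ (i \o g2) : {linear _ -> _}) => u hu.
by rewrite /= hg2 // linearZ -iphi //= scalerBr addrC subrK scalerA mulrC.
Qed.

Lemma absolutely_w_pure_quo : coherent R ->
  short_exact i p -> absolutely_w_pure A -> absolutely_w_pure B -> absolutely_w_pure C.
Proof.
move=> coh [inj_i [surj_p exact_ip]] wA wB m n M f hf.
have pi0 x : p (i x) = 0 by apply/exact_ip; exists x.
have [k [S hS]] := coherent_row_kernel coh M.
have [G hG] := linear_on_sub_mulmx hf.
have [H pH] := lift_linear_rV surj_p G.
have hH : linear_on_sub S H by move=> c x y _ _; apply: linearP.
have H_in_A x : in_rowspan S x -> exists y, H x = i y.
  by move=> /hS xM0; apply/exact_ip; rewrite pH hG xM0 (linear_on_sub0 hf).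
have [phi [hphi iphi]] := factor_through_injective inj_i hH H_in_A.
have [k1 [a [GVa ha]]] := wA k m S phi hphi.
apply: (contains_GV_ideal_ext (extends_scaled_closed M f) GVa) => j.
have [g1 hg1] := ha _ (generator_in_ideal_gen a j).
pose H' : {linear 'rV[R]_m -> B} := a j \*: H \- (i \o g1).
have H'ker x : x *m M = 0 -> H' x = 0.
  by move=> /hS xS; rewrite /= hg1 // linearZ -iphi // subrr.
have [psi [hpsi psiE]] := factor_through_mulmx H'ker.
have [k2 [b [GVb hb]]] := wB m n M psi hpsi.
exists k2, b; split=> // s hs.
have [g2 hg2] := hb s hs.
exists (p \o g2 : {linear _ -> _}) => _ [x ->].
rewrite /= hg2; last by exists x.
by rewrite linearZ psiE /= linearB linearZ pH hG pi0 subr0 scalerA mulrC.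
Qed.

End ShortExactSequences.

Theorem lemma2p12 (R : comNzRingType) (A B C : lmodType R)
    (i : {linear A -> B}) (p : {linear B -> C}) :
  coherent R -> short_exact i p -> absolutely_w_pure A ->
  (absolutely_w_pure B <-> absolutely_w_pure C).
Proof.
move=> coh ses wA; split.
- exact: (absolutely_w_pure_quo coh ses wA).
- exact: (absolutely_w_pure_ext ses wA).
Qed.
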